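(* Let $\Lambda>1$. Then there exists at most one solution, modulo translations in $z$, of \[ -v_1''+v_1^3-v_1+\Lambda v_2^2v_1=0,\qquad -v_2''+v_2^3-v_2+\Lambda v_1^2v_2=0,\qquad z\in\mathbb{R}, \] \[ (v_1,v_2)\to(0,1)\ \text{as } z\to-\infty,\qquad (v_1,v_2)\to(1,0)\ \text{as } z\to+\infty, \] such that both $v_1$ and $v_2$ are positive and at least one of $v_1,v_2$ is strictly monotone on $\mathbb{R}$. *)

From Stdlib Require Import Reals.
From Coquelicot Require Import Coquelicot.
Open Scope R_scope.

Definition twice_derivable (f : R -> R) : Prop :=
  forall z, ex_derive f z /\ ex_derive (Derive f) z.

Definition is_system_solution (L : R) (v1 v2 : R -> R) : Prop :=
  twice_derivable v1 /\ twice_derivable v2 /\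
  (forall z, - Derive_n v1 2 z + v1 z ^ 3 - v1 z + L * v2 z ^ 2 * v1 z = 0) /\
  (forall z, - Derive_n v2 2 z + v2 z ^ 3 - v2 z + L * v1 z ^ 2 * v2 z = 0).

Definition has_boundary_conditions (v1 v2 : R -> R) : Prop :=
  is_lim v1 m_infty 0 /\ is_lim v2 m_infty 1 /\
  is_lim v1 p_infty 1 /\ is_lim v2 p_infty 0.

Definition strictly_monotone (f : R -> R) : Prop :=
  (forall x y, x < y -> f x < f y) \/ (forall x y, x < y -> f y < f x).

Definition admissible (L : R) (v1 v2 : R -> R) : Prop :=
  is_system_solution L v1 v2 /\ has_boundary_conditions v1 v2 /\
  (forall z, 0 < v1 z) /\ (forall z, 0 < v2 z) /\
  (strictly_monotone v1 \/ strictly_monotone v2).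

(* Sliding method.  In the order [v1 >= w1, v2 <= w2] the competitive system
   becomes cooperative, and a comparison principle holds on every half-line where
   the two waves stay close to the same equilibrium: for [L > 1] both (0,1) and
   (1,0) are stable, so a negative minimum of the gaps is impossible there.  Using
   the monotonicity of [v1] on the left, a far enough translate of [v] dominates
   [w].  Slide the translate back to the infimal dominating shift.  By the strong
   maximum principle the ordered waves there either coincide or are strictly
   ordered, and strict order would allow sliding further, by compactness in the
   middle and the comparison principle on the tails. *)

From Stdlib Require Import Reals Lra Psatz Classical FunctionalExtensionality.
From Coquelicot Require Import Coquelicot.
Open Scope R_scope.

Definition reaction (L a b : R) : R := a ^ 3 - a + L * b ^ 2 * a.

Definition has_d2 (f f' f'' : R -> R) : Prop :=
  (forall x, derivable_pt_lim f x (f' x)) /\ (forall x, derivable_pt_lim f' x (f'' x)).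

Definition shift (f : R -> R) (t : R) : R -> R := fun z => f (z + t).

Definition lim_pinfty (f : R -> R) (l : R) : Prop :=
  forall e, 0 < e -> exists M, forall z, M < z -> Rabs (f z - l) < e.

(* Limits at [-oo] are limits at [+oo] of the mirrored function, so that
   statements about the left tail follow from those about the right tail. *)
Definition lim_minfty (f : R -> R) (l : R) : Prop := lim_pinfty (fun z => f (- z)) l.

Lemma lim_pinfty_of_is_lim f (l : R) : is_lim f p_infty l -> lim_pinfty f l.
Proof.
  intros H e He; apply is_lim_spec in H.
  destruct (H (mkposreal e He)) as [M HM]; exists M; exact HM.
Qed.

Lemma lim_minfty_of_is_lim f (l : R) : is_lim f m_infty l -> lim_minfty f l.
Proof.
  intros H e He; apply is_lim_spec in H.
  destruct (H (mkposreal e He)) as [M HM]; exists (- M).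
  intros z Hz; apply HM; lra.
Qed.

Lemma lim_pinfty_shift f l t : lim_pinfty f l -> lim_pinfty (shift f t) l.
Proof.
  intros H e He; destruct (H e He) as [M HM]; exists (M - t).
  intros z Hz; apply HM; lra.
Qed.

Lemma lim_minfty_shift f l t : lim_minfty f l -> lim_minfty (shift f t) l.
Proof.
  intros H e He; destruct (H e He) as [M HM]; exists (M + t).
  intros z Hz; unfold shift; replace (- z + t) with (- (z - t)) by ring; apply HM; lra.
Qed.

Lemma lim_minfty_mirror f l : lim_pinfty f l -> lim_minfty (fun z => f (- z)) l.
Proof.
  intros H e He; destruct (H e He) as [M HM]; exists M.
  intros z Hz; rewrite Ropp_involutive; auto.
Qed.

Lemma lim_pinfty_sub f g l :
  lim_pinfty f l -> lim_pinfty g l -> lim_pinfty (fun z => f z - g z) 0.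
Proof.
  intros Hf Hg e He.
  destruct (Hf (e / 2)) as [M1 H1]; [lra|]; destruct (Hg (e / 2)) as [M2 H2]; [lra|].
  exists (Rmax M1 M2); intros z Hz.
  pose proof (Rmax_l M1 M2); pose proof (Rmax_r M1 M2).
  specialize (H1 z ltac:(lra)); specialize (H2 z ltac:(lra)).
  apply Rabs_def2 in H1; apply Rabs_def2 in H2; apply Rabs_def1; lra.
Qed.

Lemma lim_pinfty_eventually_lt f l c :
  lim_pinfty f l -> l < c -> exists M, forall z, M < z -> f z < c.
Proof.
  intros H Hc; destruct (H (c - l)) as [M HM]; [lra|]; exists M.
  intros z Hz; specialize (HM z Hz); apply Rabs_def2 in HM; lra.
Qed.

Lemma lim_pinfty_eventually_gt f l c :
  lim_pinfty f l -> c < l -> exists M, forall z, M < z -> c < f z.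
Proof.
  intros H Hc; destruct (H (l - c)) as [M HM]; [lra|]; exists M.
  intros z Hz; specialize (HM z Hz); apply Rabs_def2 in HM; lra.
Qed.

Lemma derivable_pt_lim_shift f x t l :
  derivable_pt_lim f (x + t) l -> derivable_pt_lim (shift f t) x l.
Proof.
  intros H e He; destruct (H e He) as [d Hd]; exists d; intros h Hh Hhd.
  unfold shift; replace (x + h + t) with (x + t + h) by ring; auto.
Qed.

Lemma has_d2_shift f f' f'' t :
  has_d2 f f' f'' -> has_d2 (shift f t) (shift f' t) (shift f'' t).
Proof. intros [D1 D2]; split; intros x; apply derivable_pt_lim_shift; auto. Qed.

Lemma has_d2_sub f f' f'' g g' g'' :
  has_d2 f f' f'' -> has_d2 g g' g'' ->
  has_d2 (fun x => f x - g x) (fun x => f' x - g' x) (fun x => f'' x - g'' x).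
Proof.
  intros [Df Df'] [Dg Dg']; split; intros x; apply derivable_pt_lim_minus; auto.
Qed.

Lemma has_d2_opp f f' f'' :
  has_d2 f f' f'' -> has_d2 (fun x => - f x) (fun x => - f' x) (fun x => - f'' x).
Proof. intros [D1 D2]; split; intros x; apply derivable_pt_lim_opp; auto. Qed.

Lemma has_d2_mirror f f' f'' :
  has_d2 f f' f'' ->
  has_d2 (fun x => f (- x)) (fun x => - f' (- x)) (fun x => f'' (- x)).
Proof.
  intros [D1 D2]; split; intros x.
  - apply (derivable_pt_lim_mirr_fwd f); rewrite Ropp_involutive; auto.
  - rewrite <- (Ropp_involutive (f'' (- x))).
    apply (derivable_pt_lim_opp (mirr_fct f')), derivable_pt_lim_mirr_fwd.
    rewrite Ropp_involutive; auto.
Qed.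

Lemma has_d2_continuous f f' f'' x : has_d2 f f' f'' -> continuity_pt f x.
Proof. intros [D _]; apply derivable_continuous_pt; exists (f' x); apply D. Qed.

Lemma has_d2_continuous_deriv f f' f'' x : has_d2 f f' f'' -> continuity_pt f' x.
Proof. intros [_ D]; apply derivable_continuous_pt; exists (f'' x); apply D. Qed.

Lemma deriv_at_local_min f l x d :
  derivable_pt_lim f x l -> 0 < d ->
  (forall y, Rabs (y - x) < d -> f x <= f y) -> l = 0.
Proof.
  intros D Hd Hmin.
  apply (deriv_minimum f (x - d) (x + d) x (exist _ l D)); try lra.
  intros y Hy1 Hy2; apply Hmin; apply Rabs_def1; lra.
Qed.

Lemma local_min_d2_nonneg f f' f'' x d :
  has_d2 f f' f'' -> 0 < d ->
  (forall y, Rabs (y - x) < d -> f x <= f y) -> 0 <= f'' x.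
Proof.
  intros [D1 D2] Hd Hmin.
  assert (Hf'x : f' x = 0) by exact (deriv_at_local_min f (f' x) x d (D1 x) Hd Hmin).
  destruct (Rle_or_lt 0 (f'' x)) as [|Hneg]; auto; exfalso.
  destruct (D2 x (- f'' x)) as [del Hdel]; [lra|].
  set (h := Rmin d del / 2).
  assert (Hh : 0 < h /\ h < d /\ h < del).
  { pose proof (cond_pos del); unfold h, Rmin; destruct Rle_dec; lra. }
  destruct (MVT_cor2 f f' x (x + h)) as [c [Hfc Hc]]; [lra|intros; auto|].
  (* [f'] decreases through its zero at [x], so [f] decreases just right of [x]. *)
  assert (Hf'c : f' c < 0).
  { specialize (Hdel (c - x) ltac:(lra) ltac:(rewrite Rabs_right; lra)).
    replace (x + (c - x)) with c in Hdel by ring; rewrite Hf'x in Hdel.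
    apply Rabs_def2 in Hdel.
    replace (f' c) with ((f' c - 0) / (c - x) * (c - x)) by (field; lra); nra. }
  assert (f x <= f (x + h)) by (apply Hmin; rewrite Rabs_right; lra).
  nra.
Qed.

(** * Maximum principles *)

Lemma second_order_bound_right f f' f'' x h C :
  has_d2 f f' f'' -> f x = 0 -> f' x = 0 -> 0 <= C ->
  (forall c, x <= c <= x + h -> f'' c <= C) ->
  forall y, x <= y <= x + h -> f y <= C * h * h.
Proof.
  intros [D1 D2] Hfx Hf'x HC Hbound y Hy.
  destruct (Req_dec y x) as [->|Hne]; [rewrite Hfx; nra|].
  destruct (MVT_cor2 f f' x y) as [c [Hfc Hc]]; [lra|intros; auto|].
  destruct (MVT_cor2 f' f'' x c) as [c' [Hf'c Hc']]; [lra|intros; auto|].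
  assert (f'' c' <= C) by (apply Hbound; lra).
  assert (f' c <= C * h) by nra.
  assert (f' c * (y - x) <= C * h * (y - x)) by (apply Rmult_le_compat_r; lra).
  assert (C * h * (y - x) <= C * h * h) by (apply Rmult_le_compat_l; nra).
  lra.
Qed.

Lemma second_order_bound f f' f'' x h C :
  has_d2 f f' f'' -> f x = 0 -> f' x = 0 -> 0 <= C ->
  (forall c, Rabs (c - x) <= h -> f'' c <= C) ->
  forall y, Rabs (y - x) <= h -> f y <= C * h * h.
Proof.
  intros Hf Hfx Hf'x HC Hbound y Hy.
  apply Rabs_le_between in Hy.
  destruct (Rle_or_lt x y) as [Hxy|Hxy].
  - apply (second_order_bound_right f f' f'' x h C Hf Hfx Hf'x HC); [|lra].
    intros c Hc; apply Hbound, Rabs_le_between; lra.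
  - rewrite <- (Ropp_involutive y).
    apply (second_order_bound_right _ _ _ (- x) h C (has_d2_mirror f f' f'' Hf));
      rewrite ?Ropp_involutive; [exact Hfx|rewrite Hf'x; ring|exact HC| |lra].
    intros c Hc; apply Hbound, Rabs_le_between; lra.
Qed.

Lemma strong_max_principle_local f f' f'' K x :
  0 <= K -> has_d2 f f' f'' -> (forall y, 0 <= f y) -> (forall y, f'' y <= K * f y) ->
  f x = 0 -> forall y, Rabs (y - x) <= / (K + 1) -> f y = 0.
Proof.
  intros HK Hf Hpos Hsub Hfx.
  set (h := / (K + 1)).
  assert (Hh : 0 < h) by (apply Rinv_0_lt_compat; lra).
  assert (HKh : K * h * h < 1).
  { assert (h * (K + 1) = 1) by (unfold h; field; lra). nra. }
  assert (Hf'x : f' x = 0).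
  { apply (deriv_at_local_min f (f' x) x 1); [apply Hf|lra|].
    intros y _; rewrite Hfx; auto. }
  destruct (continuity_ab_maj f (x - h) (x + h)) as [ym [Hym Hymx]];
    [lra|intros; eapply has_d2_continuous; eauto|].
  set (M := f ym).
  assert (HM : 0 <= M) by apply Hpos.
  (* On the interval [f'' <= K M], so [f <= K M h^2 < M] unless [M = 0]. *)
  assert (Hbound : forall y, Rabs (y - x) <= h -> f y <= K * M * h * h).
  { apply (second_order_bound f f' f'' x h (K * M) Hf Hfx Hf'x); [nra|].
    intros c Hc; apply Rabs_le_between in Hc.
    apply (Rle_trans _ (K * f c)); [apply Hsub|apply Rmult_le_compat_l; auto].
    apply Hym; lra. }
  assert (M <= K * M * h * h).
  { apply Hbound; apply Rabs_le_between; lra. }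
  intros y Hy; apply Rabs_le_between in Hy.
  specialize (Hym y ltac:(lra)); specialize (Hpos y); fold M in Hym; nra.
Qed.

Lemma strong_max_principle f f' f'' K x :
  0 <= K -> has_d2 f f' f'' -> (forall y, 0 <= f y) -> (forall y, f'' y <= K * f y) ->
  f x = 0 -> forall y, f y = 0.
Proof.
  intros HK Hf Hpos Hsub Hfx.
  set (h := / (K + 1)).
  assert (Hh : 0 < h) by (apply Rinv_0_lt_compat; lra).
  assert (Hspread : forall n y, Rabs (y - x) <= INR n * h -> f y = 0).
  { induction n as [|n IH]; intros y Hy.
    - simpl in Hy; rewrite Rmult_0_l in Hy.
      replace y with x by (pose proof (Rabs_pos (y - x)); apply Rabs_le_between in Hy; lra).
      exact Hfx.
    - rewrite S_INR in Hy; apply Rabs_le_between in Hy.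
      pose proof (pos_INR n).
      destruct (Rle_or_lt (Rabs (y - x)) (INR n * h)) as [Hin|Hout]; [auto|].
      set (x' := if Rle_dec x y then x + INR n * h else x - INR n * h).
      apply (strong_max_principle_local f f' f'' K x' HK Hf Hpos Hsub).
      + apply IH; unfold x'; destruct Rle_dec; apply Rabs_le_between; nra.
      + fold h; unfold x' in *; destruct Rle_dec;
          [rewrite Rabs_right in Hout|rewrite Rabs_left in Hout];
          try lra; apply Rabs_le_between; lra. }
  intros y; destruct (INR_unbounded (Rabs (y - x) / h)) as [n Hn].
  apply (Hspread n).
  apply Rlt_le; replace (Rabs (y - x)) with (Rabs (y - x) / h * h) by (field; lra).
  apply Rmult_lt_compat_r; lra.
Qed.

Lemma negative_min_attained g A :
  (forall x, continuity_pt g x) -> lim_pinfty g 0 -> 0 <= g A ->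
  (forall z, A <= z -> 0 <= g z) \/
  (exists z0, A < z0 /\ g z0 < 0 /\ forall y, A <= y -> g z0 <= g y).
Proof.
  intros Hc Hlim HA.
  destruct (classic (exists z1, A <= z1 /\ g z1 < 0)) as [[z1 [Hz1 Hg1]]|Hno].
  - right. destruct (lim_pinfty_eventually_gt g 0 (g z1) Hlim Hg1) as [M HM].
    set (B := Rmax (M + 1) z1).
    assert (HB : z1 <= B /\ M < B) by (unfold B; split; [apply Rmax_r|
      pose proof (Rmax_l (M + 1) z1); lra]).
    destruct (continuity_ab_min g A B) as [z0 [Hmin Hz0]]; [lra|auto|].
    assert (g z0 <= g z1) by (apply Hmin; lra).
    exists z0; repeat split; try lra.
    + destruct (Rle_lt_or_eq_dec A z0 (proj1 Hz0)) as [|<-]; lra.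
    + intros y Hy; destruct (Rle_or_lt y B) as [|HyB]; [apply Hmin; lra|].
      specialize (HM y ltac:(lra)); lra.
  - left; intros z Hz; apply Rnot_lt_le; intros Hgz; apply Hno; eauto.
Qed.

(* The gap reaching the lower negative minimum lies below the other gap there, so
   the hypotheses give it a negative second derivative at a minimum. *)
Lemma min_principle_right d1 d2 e1 e2 F1 F2 A :
  has_d2 d1 e1 F1 -> has_d2 d2 e2 F2 -> lim_pinfty d1 0 -> lim_pinfty d2 0 ->
  (forall z, A < z -> d1 z < 0 -> d1 z <= d2 z -> F1 z < 0) ->
  (forall z, A < z -> d2 z < 0 -> d2 z <= d1 z -> F2 z < 0) ->
  0 <= d1 A -> 0 <= d2 A -> forall z, A <= z -> 0 <= d1 z /\ 0 <= d2 z.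
Proof.
  intros H1 H2 Hl1 Hl2 Hc1 Hc2 HA1 HA2.
  assert (Hmin_d2 : forall d e F z0, has_d2 d e F -> A < z0 ->
            (forall y, A <= y -> d z0 <= d y) -> 0 <= F z0).
  { intros d e F z0 Hd Hz0 Hmin.
    apply (local_min_d2_nonneg d e F z0 (z0 - A) Hd); [lra|].
    intros y Hy; apply Hmin; apply Rabs_def2 in Hy; lra. }
  destruct (negative_min_attained d1 A (fun x => has_d2_continuous _ _ _ x H1) Hl1 HA1)
    as [Hpos1|[z1 (Hz1 & Hneg1 & Hmin1)]];
  destruct (negative_min_attained d2 A (fun x => has_d2_continuous _ _ _ x H2) Hl2 HA2)
    as [Hpos2|[z2 (Hz2 & Hneg2 & Hmin2)]].
  - auto.
  - specialize (Hmin_d2 _ _ _ z2 H2 Hz2 Hmin2); specialize (Hpos1 z2 ltac:(lra)).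
    specialize (Hc2 z2 Hz2 Hneg2 ltac:(lra)); lra.
  - specialize (Hmin_d2 _ _ _ z1 H1 Hz1 Hmin1); specialize (Hpos2 z1 ltac:(lra)).
    specialize (Hc1 z1 Hz1 Hneg1 ltac:(lra)); lra.
  - destruct (Rle_or_lt (d1 z1) (d2 z2)).
    + specialize (Hmin_d2 _ _ _ z1 H1 Hz1 Hmin1); specialize (Hmin2 z1 ltac:(lra)).
      specialize (Hc1 z1 Hz1 Hneg1 ltac:(lra)); lra.
    + specialize (Hmin_d2 _ _ _ z2 H2 Hz2 Hmin2); specialize (Hmin1 z2 ltac:(lra)).
      specialize (Hc2 z2 Hz2 Hneg2 ltac:(lra)); lra.
Qed.

Lemma min_principle_left d1 d2 e1 e2 F1 F2 A :
  has_d2 d1 e1 F1 -> has_d2 d2 e2 F2 -> lim_minfty d1 0 -> lim_minfty d2 0 ->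
  (forall z, z < A -> d1 z < 0 -> d1 z <= d2 z -> F1 z < 0) ->
  (forall z, z < A -> d2 z < 0 -> d2 z <= d1 z -> F2 z < 0) ->
  0 <= d1 A -> 0 <= d2 A -> forall z, z <= A -> 0 <= d1 z /\ 0 <= d2 z.
Proof.
  intros H1 H2 Hl1 Hl2 Hc1 Hc2 HA1 HA2 z Hz.
  rewrite <- (Ropp_involutive z).
  apply (min_principle_right _ _ _ _ _ _ (- A)
           (has_d2_mirror _ _ _ H1) (has_d2_mirror _ _ _ H2) Hl1 Hl2);
    rewrite ?Ropp_involutive; auto; try lra.
  - intros y Hy; apply Hc1; lra.
  - intros y Hy; apply Hc2; lra.
Qed.

(** * The comparison condition near the equilibria *)

Lemma reaction_sub L a1 a2 b1 b2 :
  reaction L a1 a2 - reaction L b1 b2 =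
  (a1 - b1) * (a1 ^ 2 + a1 * b1 + b1 ^ 2 - 1 + L * a2 ^ 2) - L * b1 * (a2 + b2) * (b2 - a2).
Proof. unfold reaction; ring. Qed.

Definition minimal_gap_cond (L a1 a2 b1 b2 : R) : Prop :=
  a1 - b1 < 0 -> a1 - b1 <= b2 - a2 -> reaction L a1 a2 - reaction L b1 b2 < 0.

(* The second components are compared in reverse order, which makes the
   competitive system cooperative. *)
Definition comparison_cond (L x1 x2 y1 y2 : R) : Prop :=
  minimal_gap_cond L x1 x2 y1 y2 /\ minimal_gap_cond L y2 y1 x2 x1.

(* [close_to_10 e x2 x1] says that [(x1, x2)] is close to (0,1). *)
Definition close_to_10 (e a b : R) : Prop := 1 - e < a < 1 /\ 0 < b < e.

Definition small_eps (L e : R) : Prop :=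
  0 < e /\ e < 1 / 4 /\ 2 * L * e < 2 - 6 * e /\ 4 * L * e < L - 1.

Lemma small_eps_exists L : 1 < L -> exists e, small_eps L e.
Proof.
  intros HL; exists ((L - 1) / (8 * L * (L + 3))).
  assert (He : (L - 1) / (8 * L * (L + 3)) * (8 * L * (L + 3)) = L - 1) by (field; lra).
  assert (0 < (L - 1) / (8 * L * (L + 3))) by (apply Rdiv_lt_0_compat; nra).
  repeat split; nra.
Qed.

Lemma minimal_gap_cond_of_coeffs L a1 a2 b1 b2 :
  0 <= L * b1 * (a2 + b2) ->
  L * b1 * (a2 + b2) < a1 ^ 2 + a1 * b1 + b1 ^ 2 - 1 + L * a2 ^ 2 ->
  minimal_gap_cond L a1 a2 b1 b2.
Proof. intros HB HA Hneg Hle; rewrite reaction_sub; nra. Qed.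

Lemma minimal_gap_cond_near_10 L e a1 a2 b1 b2 :
  1 < L -> small_eps L e -> close_to_10 e a1 a2 -> close_to_10 e b1 b2 ->
  minimal_gap_cond L a1 a2 b1 b2.
Proof.
  intros HL (He & He4 & He1 & He2) [Ha1 Ha2] [Hb1 Hb2].
  apply minimal_gap_cond_of_coeffs; [apply Rmult_le_pos; nra|].
  assert (L * b1 * (a2 + b2) <= L * (2 * e)).
  { rewrite Rmult_assoc; apply Rmult_le_compat_l; nra. }
  assert (1 - 2 * e <= a1 ^ 2 /\ 1 - 2 * e <= b1 ^ 2 /\ 1 - 2 * e <= a1 * b1) by nra.
  assert (0 <= L * a2 ^ 2) by nra.
  nra.
Qed.

Lemma minimal_gap_cond_near_01 L e a1 a2 b1 b2 :
  1 < L -> small_eps L e -> close_to_10 e a2 a1 -> close_to_10 e b2 b1 ->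
  minimal_gap_cond L a1 a2 b1 b2.
Proof.
  intros HL (He & He4 & He1 & He2) [Ha2 Ha1] [Hb2 Hb1].
  apply minimal_gap_cond_of_coeffs; [apply Rmult_le_pos; nra|].
  assert (L * b1 * (a2 + b2) <= L * (2 * e)).
  { rewrite Rmult_assoc; apply Rmult_le_compat_l; nra. }
  assert (L * (1 - 2 * e) <= L * a2 ^ 2) by (apply Rmult_le_compat_l; nra).
  assert (0 <= a1 ^ 2 + a1 * b1 + b1 ^ 2) by nra.
  nra.
Qed.

Lemma comparison_cond_near_10 L e x1 x2 y1 y2 :
  1 < L -> small_eps L e -> close_to_10 e x1 x2 -> close_to_10 e y1 y2 ->
  comparison_cond L x1 x2 y1 y2.
Proof.
  intros; split; [eapply minimal_gap_cond_near_10|eapply minimal_gap_cond_near_01]; eauto.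
Qed.

Lemma comparison_cond_near_01 L e x1 x2 y1 y2 :
  1 < L -> small_eps L e -> close_to_10 e x2 x1 -> close_to_10 e y2 y1 ->
  comparison_cond L x1 x2 y1 y2.
Proof.
  intros; split; [eapply minimal_gap_cond_near_01|eapply minimal_gap_cond_near_10]; eauto.
Qed.

Lemma comparison_cond_mixed L e d x1 x2 y1 y2 :
  1 < L -> small_eps L e -> 0 < d <= e -> y1 < d -> close_to_10 e y2 y1 ->
  0 < x1 < 1 -> 0 < x2 < 1 -> (x1 < d -> close_to_10 e x2 x1) ->
  comparison_cond L x1 x2 y1 y2.
Proof.
  intros HL Heps Hd Hy1 Hy Hx1 Hx2 Hx.
  split.
  - intros Hneg; apply (minimal_gap_cond_near_01 L e); auto; apply Hx; lra.
  - intros Hneg Hle. destruct (Rlt_or_le x1 d) as [Hsmall|Hlarge].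
    + apply (minimal_gap_cond_near_10 L e); auto.
    + destruct Heps as (He & He4 & _), Hy as [[Hy2 Hy2'] Hy1'].
      rewrite reaction_sub.
      assert (0 <= L * x2 * (y1 + x1)) by (apply Rmult_le_pos; [apply Rmult_le_pos|]; lra).
      assert (0 <= L * x2 * (y1 + x1) * (x1 - y1)) by (apply Rmult_le_pos; lra).
      assert (0 < y2 ^ 2 + y2 * x2 + x2 ^ 2 - 1 + L * y1 ^ 2) by nra.
      nra.
Qed.

Set Implicit Arguments.
Record wave (L : R) (v1 v2 p1 p2 : R -> R) : Prop := {
  wave_eq1 : has_d2 v1 p1 (fun z => reaction L (v1 z) (v2 z));
  wave_eq2 : has_d2 v2 p2 (fun z => reaction L (v2 z) (v1 z));
  wave_pos1 : forall z, 0 < v1 z;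
  wave_pos2 : forall z, 0 < v2 z;
  wave_lim1_minfty : lim_minfty v1 0;
  wave_lim2_minfty : lim_minfty v2 1;
  wave_lim1_pinfty : lim_pinfty v1 1;
  wave_lim2_pinfty : lim_pinfty v2 0 }.
Unset Implicit Arguments.

Lemma wave_of_admissible L v1 v2 :
  admissible L v1 v2 -> wave L v1 v2 (Derive v1) (Derive v2).
Proof.
  intros [[T1 [T2 [O1 O2]]] [[B1 [B2 [B3 B4]]] [P1 [P2 _]]]].
  assert (Hd2 : forall f g, twice_derivable f ->
            (forall z, - Derive_n f 2 z + reaction L (f z) (g z) = 0) ->
            has_d2 f (Derive f) (fun z => reaction L (f z) (g z))).
  { intros f g Tf Of; split; intros z; apply is_derive_Reals.
    - apply Derive_correct, (Tf z).
    - replace (reaction L (f z) (g z)) with (Derive (Derive f) z)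
        by (specialize (Of z); change (Derive_n f 2 z) with (Derive (Derive f) z) in Of; lra).
      apply Derive_correct, (Tf z). }
  constructor; auto using lim_pinfty_of_is_lim, lim_minfty_of_is_lim.
  - apply Hd2; auto; intros z; unfold reaction; rewrite <- (O1 z); ring.
  - apply Hd2; auto; intros z; unfold reaction; rewrite <- (O2 z); ring.
Qed.

Lemma wave_shift {L v1 v2 p1 p2} t :
  wave L v1 v2 p1 p2 -> wave L (shift v1 t) (shift v2 t) (shift p1 t) (shift p2 t).
Proof.
  intros W; constructor.
  - exact (has_d2_shift _ _ _ t (wave_eq1 W)).
  - exact (has_d2_shift _ _ _ t (wave_eq2 W)).
  - intros z; apply (wave_pos1 W).
  - intros z; apply (wave_pos2 W).
  - exact (lim_minfty_shift _ _ t (wave_lim1_minfty W)).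
  - exact (lim_minfty_shift _ _ t (wave_lim2_minfty W)).
  - exact (lim_pinfty_shift _ _ t (wave_lim1_pinfty W)).
  - exact (lim_pinfty_shift _ _ t (wave_lim2_pinfty W)).
Qed.

Lemma wave_mirror {L v1 v2 p1 p2} :
  wave L v1 v2 p1 p2 ->
  wave L (fun z => v2 (- z)) (fun z => v1 (- z)) (fun z => - p2 (- z)) (fun z => - p1 (- z)).
Proof.
  intros W; constructor.
  - exact (has_d2_mirror _ _ _ (wave_eq2 W)).
  - exact (has_d2_mirror _ _ _ (wave_eq1 W)).
  - intros z; apply (wave_pos2 W).
  - intros z; apply (wave_pos1 W).
  - exact (lim_minfty_mirror _ _ (wave_lim2_pinfty W)).
  - exact (lim_minfty_mirror _ _ (wave_lim1_pinfty W)).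
  - exact (wave_lim2_minfty W).
  - exact (wave_lim1_minfty W).
Qed.

Lemma global_max_attained g a b z1 :
  (forall x, continuity_pt g x) -> lim_minfty g a -> lim_pinfty g b ->
  a < g z1 -> b < g z1 -> exists z0, forall y, g y <= g z0.
Proof.
  intros Hc Ha Hb H1 H2.
  destruct (lim_pinfty_eventually_lt _ _ _ Ha H1) as [M HM].
  destruct (lim_pinfty_eventually_lt _ _ _ Hb H2) as [N HN].
  set (A := Rmin (- M) z1); set (B := Rmax N z1).
  assert (HA : A <= z1 /\ A <= - M) by (unfold A; split; [apply Rmin_r|apply Rmin_l]).
  assert (HB : z1 <= B /\ N <= B) by (unfold B; split; [apply Rmax_r|apply Rmax_l]).
  destruct (continuity_ab_maj g A B) as [z0 [Hmax Hz0]]; [lra|auto|].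
  exists z0; intros y.
  assert (g z1 <= g z0) by (apply Hmax; lra).
  destruct (Rlt_or_le y A) as [Hy|Hy].
  - specialize (HM (- y) ltac:(lra)); rewrite Ropp_involutive in HM; lra.
  - destruct (Rlt_or_le B y) as [Hy'|Hy']; [specialize (HN y ltac:(lra)); lra|].
    apply Hmax; lra.
Qed.

Lemma component_lt_1 L f g p a b :
  0 < L -> has_d2 f p (fun z => reaction L (f z) (g z)) ->
  (forall z, 0 < f z) -> (forall z, 0 < g z) ->
  lim_minfty f a -> lim_pinfty f b -> a <= 1 -> b <= 1 -> forall z, f z < 1.
Proof.
  intros HL Hf Hfpos Hgpos Ha Hb Ha1 Hb1 z1.
  destruct (Rlt_or_le (f z1) 1) as [|Hz1]; auto; exfalso.
  assert (Hmax : exists z0, 1 <= f z0 /\ forall y, f y <= f z0).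
  { destruct (classic (exists z, 1 < f z)) as [[z Hz]|Hno].
    - destruct (global_max_attained f a b z) as [z0 Hz0]; auto; try lra.
      { intros x; eapply has_d2_continuous; eauto. }
      exists z0; split; auto; specialize (Hz0 z); lra.
    - exists z1; split; auto; intros y.
      apply Rnot_lt_le; intros Hy; apply Hno; exists y; lra. }
  destruct Hmax as [z0 [Hz0 Hmax]].
  (* At a maximum [f'' <= 0], whereas [f'' = f (f^2 - 1) + L g^2 f > 0] there. *)
  assert (Hd2 : 0 <= - reaction L (f z0) (g z0)).
  { apply (local_min_d2_nonneg _ _ (fun z => - reaction L (f z) (g z)) z0 1
             (has_d2_opp _ _ _ Hf)); [lra|].
    intros y _; specialize (Hmax y); lra. }
  unfold reaction in Hd2; specialize (Hgpos z0).
  assert (0 < L * g z0 ^ 2 * f z0) by (apply Rmult_lt_0_compat; [apply Rmult_lt_0_compat|]; nra).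
  assert (0 <= f z0 ^ 3 - f z0) by nra.
  lra.
Qed.

Lemma wave_lt_1 {L v1 v2 p1 p2} :
  0 < L -> wave L v1 v2 p1 p2 -> forall z, v1 z < 1 /\ v2 z < 1.
Proof.
  intros HL W z; split.
  - apply (component_lt_1 L v1 v2 p1 0 1 HL (wave_eq1 W) (wave_pos1 W) (wave_pos2 W)
             (wave_lim1_minfty W) (wave_lim1_pinfty W)); lra.
  - apply (component_lt_1 L v2 v1 p2 1 0 HL (wave_eq2 W) (wave_pos2 W) (wave_pos1 W)
             (wave_lim2_minfty W) (wave_lim2_pinfty W)); lra.
Qed.

Lemma wave_close_pinfty {L v1 v2 p1 p2} e :
  0 < L -> wave L v1 v2 p1 p2 -> 0 < e ->
  exists N, forall z, N < z -> close_to_10 e (v1 z) (v2 z).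
Proof.
  intros HL W He.
  destruct (lim_pinfty_eventually_gt _ _ (1 - e) (wave_lim1_pinfty W)) as [N1 H1]; [lra|].
  destruct (lim_pinfty_eventually_lt _ _ e (wave_lim2_pinfty W) He) as [N2 H2].
  exists (Rmax N1 N2); intros z Hz.
  pose proof (Rmax_l N1 N2); pose proof (Rmax_r N1 N2).
  destruct (wave_lt_1 HL W z); pose proof (wave_pos2 W z).
  split; split; auto; [apply H1|apply H2]; lra.
Qed.

Lemma wave_close_minfty {L v1 v2 p1 p2} e :
  0 < L -> wave L v1 v2 p1 p2 -> 0 < e ->
  exists M, forall z, z < M -> close_to_10 e (v2 z) (v1 z).
Proof.
  intros HL W He.
  destruct (wave_close_pinfty e HL (wave_mirror W) He) as [N HN].
  exists (- N); intros z Hz.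
  specialize (HN (- z) ltac:(lra)); rewrite Ropp_involutive in HN; exact HN.
Qed.

(** * Comparison of two waves *)

Definition dominates (v1 v2 w1 w2 : R -> R) : Prop :=
  forall z, w1 z <= v1 z /\ v2 z <= w2 z.

Lemma dominates_of_middle L v1 v2 p1 p2 w1 w2 q1 q2 A B :
  wave L v1 v2 p1 p2 -> wave L w1 w2 q1 q2 -> A <= B ->
  (forall z, z < A -> comparison_cond L (v1 z) (v2 z) (w1 z) (w2 z)) ->
  (forall z, B < z -> comparison_cond L (v1 z) (v2 z) (w1 z) (w2 z)) ->
  (forall z, A <= z <= B -> w1 z <= v1 z /\ v2 z <= w2 z) ->
  dominates v1 v2 w1 w2.
Proof.
  intros Wv Ww HAB Hleft Hright Hmid z.
  pose proof (has_d2_sub _ _ _ _ _ _ (wave_eq1 Wv) (wave_eq1 Ww)) as D1.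
  pose proof (has_d2_sub _ _ _ _ _ _ (wave_eq2 Ww) (wave_eq2 Wv)) as D2.
  assert (Hgaps : 0 <= v1 z - w1 z /\ 0 <= w2 z - v2 z); [|lra].
  destruct (Rle_or_lt z A) as [HzA|HzA]; [|destruct (Rle_or_lt z B) as [HzB|HzB]].
  - destruct (Hmid A ltac:(lra)).
    apply (min_principle_left _ _ _ _ _ _ A D1 D2); try lra.
    + exact (lim_pinfty_sub _ _ _ (wave_lim1_minfty Wv) (wave_lim1_minfty Ww)).
    + exact (lim_pinfty_sub _ _ _ (wave_lim2_minfty Ww) (wave_lim2_minfty Wv)).
    + intros y Hy; exact (proj1 (Hleft y Hy)).
    + intros y Hy; exact (proj2 (Hleft y Hy)).
  - destruct (Hmid z ltac:(lra)); lra.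
  - destruct (Hmid B ltac:(lra)).
    apply (min_principle_right _ _ _ _ _ _ B D1 D2); try lra.
    + exact (lim_pinfty_sub _ _ _ (wave_lim1_pinfty Wv) (wave_lim1_pinfty Ww)).
    + exact (lim_pinfty_sub _ _ _ (wave_lim2_pinfty Ww) (wave_lim2_pinfty Wv)).
    + intros y Hy; exact (proj1 (Hright y Hy)).
    + intros y Hy; exact (proj2 (Hright y Hy)).
Qed.

Lemma comparison_left_tail L v1 v2 p1 p2 w1 w2 q1 q2 :
  1 < L -> wave L v1 v2 p1 p2 -> wave L w1 w2 q1 q2 ->
  (forall x y, x < y -> v1 x < v1 y) ->
  exists M, forall z s, z < M ->
    comparison_cond L (v1 (z + s)) (v2 (z + s)) (w1 z) (w2 z).
Proof.
  intros HL Wv Ww Hinc.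
  assert (HL0 : 0 < L) by lra.
  destruct (small_eps_exists L HL) as [e He]; pose proof He as (He0 & _).
  destruct (wave_close_minfty e HL0 Wv He0) as [Mv HMv].
  set (d := Rmin e (v1 (Mv - 1))).
  assert (Hd : 0 < d <= e).
  { split; [apply Rmin_glb_lt; [lra|apply (wave_pos1 Wv)]|apply Rmin_l]. }
  destruct (wave_close_minfty d HL0 Ww (proj1 Hd)) as [M HM].
  exists M; intros z s Hz.
  destruct (HM z Hz) as [Hw2 Hw1].
  destruct (wave_lt_1 HL0 Wv (z + s)).
  pose proof (wave_pos1 Wv (z + s)); pose proof (wave_pos2 Wv (z + s)).
  apply (comparison_cond_mixed L e d); auto; try lra; [split; lra|].
  (* By monotonicity, [v1 < d <= v1 (Mv - 1)] only happens left of [Mv]. *)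
  intros Hsmall; apply HMv.
  destruct (Rlt_or_le (z + s) (Mv - 1)) as [|Hge]; [lra|].
  assert (v1 (Mv - 1) <= v1 (z + s)).
  { destruct (Rle_lt_or_eq_dec _ _ Hge) as [Hlt|Heq]; [left; apply Hinc; auto|].
    rewrite Heq; lra. }
  assert (d <= v1 (Mv - 1)) by apply Rmin_r.
  lra.
Qed.

Lemma comparison_right_tail L v1 v2 p1 p2 w1 w2 q1 q2 :
  1 < L -> wave L v1 v2 p1 p2 -> wave L w1 w2 q1 q2 ->
  exists N, forall z s, N < z -> N < z + s ->
    comparison_cond L (v1 (z + s)) (v2 (z + s)) (w1 z) (w2 z).
Proof.
  intros HL Wv Ww.
  assert (HL0 : 0 < L) by lra.
  destruct (small_eps_exists L HL) as [e He]; pose proof He as (He0 & _).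
  destruct (wave_close_pinfty e HL0 Wv He0) as [Nv HNv].
  destruct (wave_close_pinfty e HL0 Ww He0) as [Nw HNw].
  exists (Rmax Nv Nw); intros z s Hz Hzs.
  pose proof (Rmax_l Nv Nw); pose proof (Rmax_r Nv Nw).
  apply (comparison_cond_near_10 L e); auto; [apply HNv|apply HNw]; lra.
Qed.

Lemma dominates_on_compact_large_shift L v1 v2 p1 p2 w1 w2 q1 q2 A B :
  0 < L -> wave L v1 v2 p1 p2 -> wave L w1 w2 q1 q2 -> A <= B ->
  exists T, forall t, T <= t -> forall z, A <= z <= B ->
    w1 z <= v1 (z + t) /\ v2 (z + t) <= w2 z.
Proof.
  intros HL Wv Ww HAB.
  destruct (continuity_ab_maj w1 A B HAB) as [a1 [Hmax _]];
    [intros; exact (has_d2_continuous _ _ _ _ (wave_eq1 Ww))|].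
  destruct (continuity_ab_min w2 A B HAB) as [a2 [Hmin _]];
    [intros; exact (has_d2_continuous _ _ _ _ (wave_eq2 Ww))|].
  destruct (wave_lt_1 HL Ww a1) as [Ha1 _].
  destruct (lim_pinfty_eventually_gt _ _ (w1 a1) (wave_lim1_pinfty Wv) Ha1) as [Y1 HY1].
  destruct (lim_pinfty_eventually_lt _ _ (w2 a2) (wave_lim2_pinfty Wv) (wave_pos2 Ww a2))
    as [Y2 HY2].
  exists (Rmax Y1 Y2 - A + 1); intros t Ht z Hz.
  pose proof (Rmax_l Y1 Y2); pose proof (Rmax_r Y1 Y2).
  specialize (Hmax z Hz); specialize (Hmin z Hz).
  specialize (HY1 (z + t) ltac:(lra)); specialize (HY2 (z + t) ltac:(lra)); lra.
Qed.

Lemma compact_lower_bound g A B :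
  A <= B -> (forall x, continuity_pt g x) -> (forall x, A <= x <= B -> 0 < g x) ->
  exists mu, 0 < mu /\ forall x, A <= x <= B -> mu <= g x.
Proof.
  intros HAB Hc Hpos.
  destruct (continuity_ab_min g A B HAB) as [x0 [Hmin Hx0]]; [auto|].
  exists (g x0); auto.
Qed.

Lemma lipschitz_on_compact f f' f'' a b :
  has_d2 f f' f'' -> a <= b ->
  exists K, 0 <= K /\ forall x y, a <= x <= b -> a <= y <= b ->
    Rabs (f x - f y) <= K * Rabs (x - y).
Proof.
  intros Hf Hab.
  destruct (continuity_ab_maj (fun x => Rabs (f' x)) a b Hab) as [k [Hmax _]].
  { intros c _; apply (continuity_pt_comp f' Rabs);
      [exact (has_d2_continuous_deriv _ _ _ _ Hf)|apply Rcontinuity_abs]. }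
  exists (Rabs (f' k)); split; [apply Rabs_pos|].
  intros x y Hx Hy.
  destruct (MVT_abs f f' y x) as [c [Hc Hcxy]]; [intros; apply (proj1 Hf)|].
  rewrite Hc; apply Rmult_le_compat_r; [apply Rabs_pos|].
  apply Hmax; unfold Rmin, Rmax in Hcxy; destruct Rle_dec; lra.
Qed.

Lemma dominates_on_compact_near_strict L v1 v2 p1 p2 w1 w2 q1 q2 A B t :
  wave L v1 v2 p1 p2 -> wave L w1 w2 q1 q2 -> A <= B ->
  (forall z, A <= z <= B -> w1 z < v1 (z + t) /\ v2 (z + t) < w2 z) ->
  exists ep, 0 < ep <= 1 / 2 /\ forall s, t - ep <= s <= t -> forall z, A <= z <= B ->
    w1 z <= v1 (z + s) /\ v2 (z + s) <= w2 z.
Proof.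
  intros Wv Ww HAB Hstrict.
  destruct (compact_lower_bound (fun z => v1 (z + t) - w1 z) A B HAB) as [mu1 [Hmu1 H1]].
  { intros x; exact (has_d2_continuous _ _ _ x
      (has_d2_sub _ _ _ _ _ _ (has_d2_shift _ _ _ t (wave_eq1 Wv)) (wave_eq1 Ww))). }
  { intros x Hx; destruct (Hstrict x Hx); lra. }
  destruct (compact_lower_bound (fun z => w2 z - v2 (z + t)) A B HAB) as [mu2 [Hmu2 H2]].
  { intros x; exact (has_d2_continuous _ _ _ x
      (has_d2_sub _ _ _ _ _ _ (wave_eq2 Ww) (has_d2_shift _ _ _ t (wave_eq2 Wv)))). }
  { intros x Hx; destruct (Hstrict x Hx); lra. }
  destruct (lipschitz_on_compact _ _ _ (A + t - 1) (B + t) (wave_eq1 Wv)) as [K1 [HK1 L1]];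
    [lra|].
  destruct (lipschitz_on_compact _ _ _ (A + t - 1) (B + t) (wave_eq2 Wv)) as [K2 [HK2 L2]];
    [lra|].
  set (mu := Rmin mu1 mu2); set (K := K1 + K2).
  assert (HK : 0 <= K) by (unfold K; lra).
  assert (Hmu : 0 < mu /\ mu <= mu1 /\ mu <= mu2)
    by (unfold mu; repeat split; [apply Rmin_glb_lt; auto|apply Rmin_l|apply Rmin_r]).
  set (ep := Rmin (1 / 2) (mu / (K + 1))).
  assert (Hep : 0 < ep <= 1 / 2 /\ ep <= mu / (K + 1)).
  { unfold ep; repeat split; [apply Rmin_glb_lt; [lra|apply Rdiv_lt_0_compat]|
      apply Rmin_l|apply Rmin_r]; lra. }
  assert (HKep : K * ep < mu).
  { assert (K * ep <= K * (mu / (K + 1))) by (apply Rmult_le_compat_l; lra).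
    assert (K * (mu / (K + 1)) < mu).
    { apply (Rmult_lt_reg_r (K + 1)); [lra|].
      replace (K * (mu / (K + 1)) * (K + 1)) with (K * mu) by (field; lra); nra. }
    lra. }
  exists ep; split; [lra|]; intros s Hs z Hz.
  specialize (L1 (z + s) (z + t) ltac:(lra) ltac:(lra)).
  specialize (L2 (z + s) (z + t) ltac:(lra) ltac:(lra)).
  replace (z + s - (z + t)) with (- (t - s)) in L1, L2 by ring.
  rewrite Rabs_Ropp, (Rabs_right (t - s)) in L1, L2 by lra.
  apply Rabs_le_between in L1; apply Rabs_le_between in L2.
  specialize (H1 z Hz); specialize (H2 z Hz); simpl in H1, H2.
  assert (K1 * (t - s) + K2 * (t - s) <= K * ep) by (unfold K; nra).
  nra.
Qed.

Lemma reaction_sub_le L a1 a2 b1 b2 :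
  0 <= L -> 0 < a1 < 1 -> 0 < a2 < 1 -> 0 < b1 < 1 -> 0 < b2 < 1 ->
  b1 <= a1 -> a2 <= b2 -> reaction L a1 a2 - reaction L b1 b2 <= (3 + L) * (a1 - b1).
Proof.
  intros HL Ha1 Ha2 Hb1 Hb2 H1 H2; rewrite reaction_sub.
  assert (0 <= L * b1 * (a2 + b2)) by (apply Rmult_le_pos; [apply Rmult_le_pos|]; lra).
  assert (0 <= L * b1 * (a2 + b2) * (b2 - a2)) by (apply Rmult_le_pos; lra).
  assert (L * a2 ^ 2 <= L) by (rewrite <- (Rmult_1_r L) at 2; apply Rmult_le_compat_l; nra).
  assert (a1 ^ 2 + a1 * b1 + b1 ^ 2 - 1 + L * a2 ^ 2 <= 3 + L) by nra.
  nra.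
Qed.

Lemma reaction_inj_r L a b c :
  0 < L -> 0 < a -> 0 < b -> 0 < c -> reaction L a b = reaction L a c -> b = c.
Proof.
  intros HL Ha Hb Hc E; unfold reaction in E.
  assert (L * a * ((b + c) * (b - c)) = 0) by (rewrite <- Rmult_assoc; nra).
  assert (0 < L * a * (b + c)) by (apply Rmult_lt_0_compat; [apply Rmult_lt_0_compat|]; lra).
  rewrite <- Rmult_assoc in *; apply Rmult_integral in H as [|]; lra.
Qed.

Lemma deriv_of_zero f f' :
  (forall x, derivable_pt_lim f x (f' x)) -> (forall x, f x = 0) -> forall x, f' x = 0.
Proof.
  intros D Hf x.
  assert (E : f = fun _ => 0) by (apply functional_extensionality; auto).
  subst f; exact (uniqueness_limite _ x _ _ (D x) (derivable_pt_lim_const 0 x)).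
Qed.

Lemma touching_components_coincide L a1 a2 pa b1 b2 pb x :
  0 < L ->
  has_d2 a1 pa (fun z => reaction L (a1 z) (a2 z)) ->
  has_d2 b1 pb (fun z => reaction L (b1 z) (b2 z)) ->
  (forall z, 0 < a1 z < 1 /\ 0 < a2 z < 1 /\ 0 < b1 z < 1 /\ 0 < b2 z < 1) ->
  (forall z, b1 z <= a1 z /\ a2 z <= b2 z) -> a1 x = b1 x ->
  forall z, a1 z = b1 z /\ a2 z = b2 z.
Proof.
  intros HL Ha Hb Hbounds Hord Hx.
  pose proof (has_d2_sub _ _ _ _ _ _ Ha Hb) as D.
  assert (Hgap : forall z, a1 z - b1 z = 0).
  { apply (strong_max_principle _ _ _ (3 + L) x ltac:(lra) D); try lra.
    - intros y; destruct (Hord y); lra.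
    - intros y; destruct (Hbounds y) as (? & ? & ? & ?), (Hord y).
      apply reaction_sub_le; auto; lra. }
  pose proof (deriv_of_zero _ _ (proj1 D) Hgap) as Hgap'.
  pose proof (deriv_of_zero _ _ (proj2 D) Hgap') as Hgap''.
  intros z; specialize (Hgap z); specialize (Hgap'' z); simpl in Hgap''.
  destruct (Hbounds z) as (? & ? & ? & ?).
  split; [lra|].
  apply (reaction_inj_r L (a1 z)); try lra.
  replace (a1 z) with (b1 z) at 2 by lra; lra.
Qed.

Lemma dominates_dichotomy L v1 v2 p1 p2 w1 w2 q1 q2 :
  0 < L -> wave L v1 v2 p1 p2 -> wave L w1 w2 q1 q2 -> dominates v1 v2 w1 w2 ->
  (forall z, w1 z < v1 z /\ v2 z < w2 z) \/ (forall z, v1 z = w1 z /\ v2 z = w2 z).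
Proof.
  intros HL Wv Ww Hdom.
  assert (Hbounds : forall z, 0 < v1 z < 1 /\ 0 < v2 z < 1 /\ 0 < w1 z < 1 /\ 0 < w2 z < 1).
  { intros z; destruct (wave_lt_1 HL Wv z), (wave_lt_1 HL Ww z).
    pose proof (wave_pos1 Wv z); pose proof (wave_pos2 Wv z).
    pose proof (wave_pos1 Ww z); pose proof (wave_pos2 Ww z).
    repeat split; lra. }
  destruct (classic (exists x, v1 x = w1 x \/ v2 x = w2 x)) as [[x [Hx|Hx]]|Hno].
  - right; exact (touching_components_coincide L _ _ _ _ _ _ x HL (wave_eq1 Wv)
                    (wave_eq1 Ww) Hbounds Hdom Hx).
  - right; intros z.
    assert (Hbounds' : forall z, 0 < w2 z < 1 /\ 0 < w1 z < 1 /\ 0 < v2 z < 1 /\ 0 < v1 z < 1)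
      by (intros y; destruct (Hbounds y) as (? & ? & ? & ?); auto).
    assert (Hdom' : forall z, v2 z <= w2 z /\ w1 z <= v1 z)
      by (intros y; destruct (Hdom y); auto).
    destruct (touching_components_coincide L _ _ _ _ _ _ x HL (wave_eq2 Ww) (wave_eq2 Wv)
                Hbounds' Hdom' (eq_sym Hx) z); auto.
  - left; intros z; destruct (Hdom z) as [H1 H2].
    split; apply Rnot_le_lt; intros Hle; apply Hno; exists z; [left|right]; lra.
Qed.

Lemma ge_of_right_limit f x c :
  continuity_pt f x -> (forall h, 0 < h -> c <= f (x + h)) -> c <= f x.
Proof.
  intros Hc Hright; apply Rnot_lt_le; intros Hlt.
  destruct (Hc (c - f x)) as [d [Hd Hnear]]; [lra|].
  specialize (Hnear (x + d / 2)); specialize (Hright (d / 2) ltac:(lra)).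
  simpl in Hnear; unfold R_dist in Hnear.
  assert (Rabs (f (x + d / 2) - f x) < c - f x).
  { apply Hnear; split; [split; [exact I|lra]|].
    replace (x + d / 2 - x) with (d / 2) by ring; rewrite Rabs_right; lra. }
  apply Rabs_def2 in H; lra.
Qed.

Lemma dominates_shift_closed L v1 v2 p1 p2 w1 w2 t :
  wave L v1 v2 p1 p2 ->
  (forall s, t < s -> dominates (shift v1 s) (shift v2 s) w1 w2) ->
  dominates (shift v1 t) (shift v2 t) w1 w2.
Proof.
  intros W Hright z; unfold shift; split.
  - apply (ge_of_right_limit v1 (z + t)); [exact (has_d2_continuous _ _ _ _ (wave_eq1 W))|].
    intros h Hh; replace (z + t + h) with (z + (t + h)) by ring.
    exact (proj1 (Hright (t + h) ltac:(lra) z)).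
  - enough (- w2 z <= - v2 (z + t)) by lra.
    apply (ge_of_right_limit (fun y => - v2 y) (z + t)).
    + exact (continuity_pt_opp _ _ (has_d2_continuous _ _ _ _ (wave_eq2 W))).
    + intros h Hh; replace (z + t + h) with (z + (t + h)) by ring.
      pose proof (proj2 (Hright (t + h) ltac:(lra) z)); unfold shift in *; lra.
Qed.

(** * Sliding *)

Lemma sliding_infimum (P : R -> Prop) T M :
  (forall t, T <= t -> P t) -> (forall t, t < M -> ~ P t) ->
  exists ts, (forall s, ts < s -> P s) /\
             forall e, 0 < e -> ~ (forall s, ts - e <= s -> P s).
Proof.
  intros Hlarge Hsmall.
  set (E := fun u => forall s, - u <= s -> P s).
  assert (Hbound : bound E).
  { exists (- M); intros u Hu; apply Rnot_lt_le; intros Hlt.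
    apply (Hsmall (- u)); [lra|apply Hu; lra]. }
  assert (Hne : exists u, E u) by (exists (- T); intros s Hs; apply Hlarge; lra).
  destruct (completeness E Hbound Hne) as [m [Hub Hlub]].
  exists (- m); split.
  - intros s Hs; apply NNPP; intros Hns.
    assert (m <= - s); [|lra].
    apply Hlub; intros u Hu; apply Rnot_lt_le; intros Hlt; apply Hns, Hu; lra.
  - intros e He Hall.
    assert (E (m + e)) by (intros s Hs; apply Hall; lra).
    specialize (Hub _ H); lra.
Qed.

Lemma dominates_large_shift L v1 v2 p1 p2 w1 w2 q1 q2 :
  1 < L -> wave L v1 v2 p1 p2 -> wave L w1 w2 q1 q2 ->
  (forall x y, x < y -> v1 x < v1 y) ->
  exists T, forall t, T <= t -> dominates (shift v1 t) (shift v2 t) w1 w2.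
Proof.
  intros HL Wv Ww Hinc.
  destruct (comparison_left_tail L _ _ _ _ _ _ _ _ HL Wv Ww Hinc) as [M HM].
  destruct (comparison_right_tail L _ _ _ _ _ _ _ _ HL Wv Ww) as [N HN].
  set (B := Rmax N M).
  assert (HB : N <= B /\ M <= B) by (split; [apply Rmax_l|apply Rmax_r]).
  destruct (dominates_on_compact_large_shift L _ _ _ _ _ _ _ _ M B ltac:(lra) Wv Ww)
    as [T HT]; [lra|].
  exists (Rmax T 0); intros t Ht.
  pose proof (Rmax_l T 0); pose proof (Rmax_r T 0).
  apply (dominates_of_middle L _ _ _ _ _ _ _ _ M B (wave_shift t Wv) Ww); try lra.
  - intros z Hz; apply HM; lra.
  - intros z Hz; apply HN; lra.
  - intros z Hz; apply HT; lra.
Qed.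

Lemma dominates_near_strict L v1 v2 p1 p2 w1 w2 q1 q2 t :
  1 < L -> wave L v1 v2 p1 p2 -> wave L w1 w2 q1 q2 ->
  (forall x y, x < y -> v1 x < v1 y) ->
  (forall z, w1 z < shift v1 t z /\ shift v2 t z < w2 z) ->
  exists ep, 0 < ep /\ forall s, t - ep <= s <= t -> dominates (shift v1 s) (shift v2 s) w1 w2.
Proof.
  intros HL Wv Ww Hinc Hstrict.
  destruct (comparison_left_tail L _ _ _ _ _ _ _ _ HL Wv Ww Hinc) as [M HM].
  destruct (comparison_right_tail L _ _ _ _ _ _ _ _ HL Wv Ww) as [N HN].
  set (B := Rmax (Rmax N (N - t + 1)) M).
  assert (HB : N <= B /\ N - t + 1 <= B /\ M <= B).
  { unfold B; pose proof (Rmax_l (Rmax N (N - t + 1)) M).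
    pose proof (Rmax_l N (N - t + 1)); pose proof (Rmax_r N (N - t + 1)).
    repeat split; [lra|lra|apply Rmax_r]. }
  destruct (dominates_on_compact_near_strict L _ _ _ _ _ _ _ _ M B t Wv Ww)
    as [ep [Hep Hnear]]; [lra|intros z _; apply Hstrict|].
  exists ep; split; [lra|]; intros s Hs.
  apply (dominates_of_middle L _ _ _ _ _ _ _ _ M B (wave_shift s Wv) Ww); try lra.
  - intros z Hz; apply HM; lra.
  - intros z Hz; apply HN; lra.
  - intros z Hz; apply (Hnear s Hs z Hz).
Qed.

Lemma wave_unique_of_increasing L v1 v2 p1 p2 w1 w2 q1 q2 :
  1 < L -> wave L v1 v2 p1 p2 -> wave L w1 w2 q1 q2 ->
  (forall x y, x < y -> v1 x < v1 y) ->
  exists c, forall z, w1 z = v1 (z + c) /\ w2 z = v2 (z + c).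
Proof.
  intros HL Wv Ww Hinc.
  set (P := fun t => dominates (shift v1 t) (shift v2 t) w1 w2).
  destruct (dominates_large_shift L _ _ _ _ _ _ _ _ HL Wv Ww Hinc) as [T HT].
  destruct (lim_pinfty_eventually_lt _ _ (w1 0) (wave_lim1_minfty Wv) (wave_pos1 Ww 0))
    as [M HM].
  assert (Hsmall : forall t, t < - M -> ~ P t).
  { intros t Ht HP; destruct (HP 0) as [H _]; unfold shift in H.
    specialize (HM (- t) ltac:(lra)); rewrite Ropp_involutive, Rplus_0_l in *; lra. }
  destruct (sliding_infimum P T (- M) HT Hsmall) as [ts [Habove Hmin]].
  assert (Pts : P ts) by exact (dominates_shift_closed L _ _ _ _ _ _ ts Wv Habove).
  destruct (dominates_dichotomy L _ _ _ _ _ _ _ _ ltac:(lra) (wave_shift ts Wv) Ww Pts)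
    as [Hstrict|Heq].
  - exfalso.
    destruct (dominates_near_strict L _ _ _ _ _ _ _ _ ts HL Wv Ww Hinc Hstrict)
      as [ep [Hep Hnear]].
    apply (Hmin ep Hep); intros s Hs.
    destruct (Rle_or_lt s ts); [apply Hnear; lra|auto].
  - exists ts; intros z; destruct (Heq z); unfold shift in *; split; lra.
Qed.

Lemma not_increasing_to_0 f :
  lim_pinfty f 0 -> (forall z, 0 < f z) -> ~ (forall x y, x < y -> f x < f y).
Proof.
  intros Hlim Hpos Hinc.
  destruct (lim_pinfty_eventually_lt _ _ (f 0) Hlim (Hpos 0)) as [M HM].
  specialize (HM (Rmax M 0 + 1)); specialize (Hinc 0 (Rmax M 0 + 1)).
  pose proof (Rmax_l M 0); pose proof (Rmax_r M 0).
  specialize (HM ltac:(lra)); specialize (Hinc ltac:(lra)); lra.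
Qed.

Theorem theorem1p3 (L : R) (hL : 1 < L) (v1 v2 w1 w2 : R -> R) :
  admissible L v1 v2 -> admissible L w1 w2 ->
  exists c : R, forall z : R, w1 z = v1 (z + c) /\ w2 z = v2 (z + c).
Proof.
  intros Hv Hw.
  pose proof (wave_of_admissible L v1 v2 Hv) as Wv.
  pose proof (wave_of_admissible L w1 w2 Hw) as Ww.
  destruct Hv as (_ & _ & _ & _ & [[Hinc|Hdec]|[Hinc|Hdec]]).
  - exact (wave_unique_of_increasing L _ _ _ _ _ _ _ _ hL Wv Ww Hinc).
  - exfalso; apply (not_increasing_to_0 (fun z => v1 (- z)) (wave_lim1_minfty Wv)).
    + intros z; apply (wave_pos1 Wv).
    + intros x y Hxy; apply Hdec; lra.
  - exfalso; exact (not_increasing_to_0 v2 (wave_lim2_pinfty Wv) (wave_pos2 Wv) Hinc).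
  - (* The mirrored waves [(v2 (-z), v1 (-z))] have an increasing first component. *)
    destruct (wave_unique_of_increasing L _ _ _ _ _ _ _ _ hL (wave_mirror Wv)
                (wave_mirror Ww) (fun x y Hxy => Hdec (- y) (- x) ltac:(lra))) as [c Hc].
    exists (- c); intros z; destruct (Hc (- z)) as [H1 H2].
    rewrite Ropp_involutive in H1, H2.
    replace (- (- z + c)) with (z + - c) in H1, H2 by ring; auto.
Qed.
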